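(* For every integer $k\ge0$ and every $x\in U_k$, $\{d_{U_k}(x,x'):x'\in U_k,\ x'\ne x\}=\{k-2j: j=0,1,\ldots,\lfloor\frac{k-1}{2}\rfloor\}$.
   Context: For metric spaces $X,Y$ and $a>0$, $X\overset{a}{\sqcup}Y$ is the disjoint union with the original metrics on each part and distance $a$ between points of different parts. The sequence $(U_k)_{k\ge0}$: $U_0$ is a one-point space, $U_1$ is a two-point space with distance $1$, and $U_k=U_{k-2}\overset{k}{\sqcup}U_{k-2}$ for $k>1$. (For $k=0$ the right-hand set is empty.) *)

From Stdlib Require Import Arith Bool.

(* Carrier of U_k.  U_0 = one point, U_1 = two points,
   U_{k+2} = U_k ⊔ U_k, the boolean tag recording which copy. *)
Fixpoint U (k : nat) : Type :=
  match k with
  | 0 => unit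
  | 1 => bool
  | S (S k') => (bool * U k')%type
  end.

Fixpoint Ud (k : nat) : U k -> U k -> nat :=
  match k return U k -> U k -> nat with
  | 0 => fun _ _ => 0
  | 1 => fun x y => if Bool.eqb x y then 0 else 1
  | S (S k') => fun x y =>
      if Bool.eqb (fst x) (fst y) then Ud k' (snd x) (snd y) else S (S k')
  end.

From Stdlib Require Import Bool Lia Setoid.

(* A point of U_{k+2} is at distance k+2 from every point of the other copy and
   sees its own copy as U_k, so its distance set is {k+2} ∪ D_k, where D_k is
   the distance set in U_k.  The target sets {k, k-2, ...} (positive terms only)
   obey the same recursion, and the cases k = 0, 1 agree. *)

Lemma nat_ind2 (P : nat -> Prop) :
  P 0 -> P 1 -> (forall n, P n -> P (S (S n))) -> forall n, P n.
Proof.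
  intros H0 H1 HSS; fix IH 1; intros [|[|n]]; [exact H0 | exact H1 | exact (HSS n (IH n))].
Qed.

Definition realized_distance (k : nat) (x : U k) (d : nat) : Prop :=
  exists x' : U k, x' <> x /\ Ud k x x' = d.

Definition down_by_two (k d : nat) : Prop :=
  exists j : nat, 2 * j + 1 <= k /\ d = k - 2 * j.

Lemma realized_distance_0 (x : U 0) (d : nat) : realized_distance 0 x d <-> False.
Proof. split; [intros [x' [Hx' _]]; destruct x, x'; auto | easy]. Qed.

Lemma realized_distance_1 (x : U 1) (d : nat) : realized_distance 1 x d <-> d = 1.
Proof.
  split.
  - intros [x' [Hx' <-]]; destruct x, x'; simpl; congruence.
  - intros ->; exists (negb x); destruct x; split; easy.
Qed.

Lemma realized_distance_SS (k : nat) (b : bool) (y : U k) (d : nat) :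
  realized_distance (S (S k)) (b, y) d <-> d = S (S k) \/ realized_distance k y d.
Proof.
  split.
  - intros [[b' y'] [Hne <-]]; simpl.
    destruct (Bool.eqb b b') eqn:Eb; [right | now left].
    apply eqb_prop in Eb; subst b'.
    exists y'; split; [congruence | reflexivity].
  - intros [-> | [y' [Hne <-]]].
    + exists (negb b, y); split.
      * destruct b; discriminate.
      * simpl; now destruct b.
    + exists (b, y'); split.
      * congruence.
      * simpl; now rewrite eqb_reflx.
Qed.

Lemma down_by_two_0 (d : nat) : down_by_two 0 d <-> False.
Proof. split; [intros [j [Hj _]]; lia | easy]. Qed.

Lemma down_by_two_1 (d : nat) : down_by_two 1 d <-> d = 1.
Proof.
  split.
  - intros [j [Hj ->]]; lia.
  - intros ->; exists 0; lia.
Qed.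

Lemma down_by_two_SS (k d : nat) :
  down_by_two (S (S k)) d <-> d = S (S k) \/ down_by_two k d.
Proof.
  split.
  - intros [[|j] [Hj ->]]; [left; lia | right; exists j; lia].
  - intros [-> | [j [Hj ->]]]; [exists 0 | exists (S j)]; lia.
Qed.

Lemma realized_distance_spec (k : nat) (x : U k) (d : nat) :
  realized_distance k x d <-> down_by_two k d.
Proof.
  revert x d; induction k as [| | k IH] using nat_ind2; intros x d.
  - now rewrite realized_distance_0, down_by_two_0.
  - now rewrite realized_distance_1, down_by_two_1.
  - destruct x as [b y].
    now rewrite realized_distance_SS, down_by_two_SS, IH.
Qed.

Theorem claim6 (k : nat) (x : U k) (d : nat) :
  (exists x' : U k, x' <> x /\ Ud k x x' = d) <->
  (exists j : nat, 2 * j + 1 <= k /\ d = k - 2 * j).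
Proof. exact (realized_distance_spec k x d). Qed.
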